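(* For every field $F$, $P(F)\leq m_F$.
   Context: $P(F)\in\mathbb Z_{\geq1}\cup\{\infty\}$ is the smallest $p$ such that every sum of squares in $F$ is a sum of $p$ squares ($\infty$ if no such $p$ exists). $m_F\in\mathbb Z_{\geq1}\cup\{\infty\}$ is the smallest $m$ such that for every $n$, every subspace $V\subseteq F^n$ of dimension $\geq m$ on which the restriction of the quadratic form $q(x)=x_1^2+\dots+x_n^2$ is non-singular (i.e. $x\mapsto B_q(x,-)|_V$ is an isomorphism $V\to V^*$, where $B_q(x,y)=q(x+y)-q(x)-q(y)$) contains a vector $v$ with $q(v)=1$. *)

From HB Require Import structures.
From mathcomp Require Import all_boot all_order all_algebra.
Set Implicit Arguments. Unset Strict Implicit. Unset Printing Implicit Defensive.
Import GRing.Theory.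
Local Open Scope ring_scope.

Definition sum_of_squares (F : fieldType) (a : F) : Prop :=
  exists (k : nat) (x : 'I_k -> F), a = \sum_(i < k) x i ^+ 2.

Definition sum_of_p_squares (F : fieldType) (p : nat) (a : F) : Prop :=
  exists x : 'I_p -> F, a = \sum_(i < p) x i ^+ 2.

Definition pyth_bound (F : fieldType) (p : nat) : Prop :=
  forall a : F, sum_of_squares a -> sum_of_p_squares p a.

(* P(F) = p  (p finite); P(F) = oo iff no p satisfies is_pythagoras_number *)
Definition is_pythagoras_number (F : fieldType) (p : nat) : Prop :=
  (1 <= p)%N /\ pyth_bound F p /\
  forall p' : nat, (1 <= p')%N -> pyth_bound F p' -> (p <= p')%N.

Definition qsq (F : fieldType) (n : nat) (x : 'rV[F]_n) : F :=
  \sum_(i < n) x 0 i ^+ 2.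

Definition Bq (F : fieldType) (n : nat) (x y : 'rV[F]_n) : F :=
  qsq (x + y) - qsq x - qsq y.

(* q restricted to V is non-singular: x |-> B_q(x,-)|_V is an isomorphism
   V -> V^*; as V is finite dimensional this means it is injective. *)
Definition q_nonsingular_on (F : fieldType) (n : nat) (V : {vspace 'rV[F]_n}) : Prop :=
  forall x, x \in V -> (forall y, y \in V -> Bq x y = 0) -> x = 0.

Definition m_bound (F : fieldType) (m : nat) : Prop :=
  forall (n : nat) (V : {vspace 'rV[F]_n}),
    (m <= \dim V)%N -> q_nonsingular_on V ->
    exists2 v, v \in V & qsq v = 1.

(* m_F = m (m finite); m_F = oo iff no m satisfies is_m_F *)
Definition is_m_F (F : fieldType) (m : nat) : Prop :=
  (1 <= m)%N /\ m_bound F m /\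
  forall m' : nat, (1 <= m')%N -> m_bound F m' -> (m <= m')%N.

Set Warnings "-notation-overridden,-ambiguous-paths,-redundant-canonical-projection".
From HB Require Import structures.
From mathcomp Require Import all_boot all_order all_algebra.
From mathcomp Require Import ring.
From Stdlib Require Import Classical.
Set Implicit Arguments. Unset Strict Implicit. Unset Printing Implicit Defensive.
Import GRing.Theory.
Local Open Scope ring_scope.

(* If 2 = 0 every sum of squares is a square.  Otherwise let a = q(x) != 0
   with x in F^k and put c = x / a, so that q(c) = 1/a.  The map
   u |-> u (x) c from F^m to F^(mk) multiplies q, hence B_q, by 1/a, so its
   image is a non-singular subspace of dimension m.  That subspace contains
   some u (x) c with q(u (x) c) = 1, i.e. q(u) = a: a is a sum of m squares. *)

Lemma ex_minimal_nat (P : nat -> Prop) :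
  (exists n, P n) -> exists p, P p /\ forall q, P q -> (p <= q)%N.
Proof.
move=> [n Pn]; apply: NNPP => no_min.
elim/ltn_ind: n Pn => n IH Pn; apply: no_min; exists n; split=> // q Pq.
by rewrite leqNgt; apply/negP => lt_qn; exact: IH lt_qn Pq.
Qed.

Lemma sum_of_p_squares_qsq (F : fieldType) p (u : 'rV[F]_p) :
  sum_of_p_squares p (qsq u).
Proof. by exists (fun i => u 0 i). Qed.

Lemma qsq0 (F : fieldType) n : qsq (0 : 'rV[F]_n) = 0.
Proof. by rewrite /qsq big1 // => i _; rewrite mxE expr0n. Qed.

Lemma Bq0l (F : fieldType) n (y : 'rV[F]_n) : Bq 0 y = 0.
Proof. by rewrite /Bq add0r qsq0 subr0 subrr. Qed.

Lemma Bq_delta_mx (F : fieldType) n (u : 'rV[F]_n) i :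
  Bq u (delta_mx 0 i) = u 0 i *+ 2.
Proof.
rewrite /Bq /qsq -!sumrB (bigD1 i) //= big1 ?addr0.
  by rewrite !mxE !eqxx /= sqrrD mulr1; ring.
by move=> j /negbTE ji; rewrite !mxE ji /= addr0 expr0n /=; ring.
Qed.

Lemma q_nonsingular_fullv (F : fieldType) n :
  (2%:R : F) != 0 -> q_nonsingular_on (fullv : {vspace 'rV[F]_n}).
Proof.
move=> two_neq0 u _ Bq_u0; apply/rowP => i; rewrite mxE.
have := Bq_u0 _ (memvf (delta_mx 0 i)); rewrite Bq_delta_mx -mulr_natr.
by move/eqP; rewrite mulf_eq0 (negbTE two_neq0) orbF => /eqP.
Qed.

Section Similitude.
Variables (F : fieldType) (m n : nat) (f : 'Hom('rV[F]_m, 'rV[F]_n)) (s : F).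
Hypotheses (s_neq0 : s != 0) (Bq_f : forall u w, Bq (f u) (f w) = s * Bq u w).

Lemma similitude_nonsingular_img (U : {vspace 'rV[F]_m}) :
  q_nonsingular_on U -> q_nonsingular_on (f @: U).
Proof.
move=> nsU _ /memv_imgP [u Uu ->] Bq_fu0.
suff -> : u = 0 by rewrite linear0.
apply: nsU => // w Uw; apply/eqP; rewrite -(mulrI_eq0 _ (lregP s_neq0)).
by rewrite -Bq_f Bq_fu0 // memv_img.
Qed.

Lemma similitude_dim_img (U : {vspace 'rV[F]_m}) :
  q_nonsingular_on (fullv : {vspace 'rV[F]_m}) -> \dim (f @: U) = \dim U.
Proof.
move=> ns_full; apply: limg_dim_eq; apply/eqP; rewrite -subv0.
apply/subvP => u /memv_capP [_]; rewrite memv_ker memv0 => /eqP fu0.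
apply/eqP; apply: (ns_full _ (memvf u)) => w _; apply: (mulfI s_neq0).
by rewrite -Bq_f fu0 Bq0l mulr0.
Qed.

End Similitude.

Section TensorRow.
Variables (F : fieldType) (k : nat) (c : 'rV[F]_k).

Definition tensor_row m (u : 'rV[F]_m) : 'rV[F]_(m * k) := mxvec (u^T *m c).

Lemma tensor_row_is_linear m : linear (@tensor_row m).
Proof.
move=> a u w; rewrite /tensor_row linearD linearZ /= mulmxDl -scalemxAl.
by rewrite linearD linearZ.
Qed.

HB.instance Definition _ m :=
  GRing.isLinear.Build F 'rV[F]_m 'rV[F]_(m * k) _ (@tensor_row m)
    (@tensor_row_is_linear m).

Lemma tensor_rowE m (u : 'rV[F]_m) i j :
  tensor_row u 0 (mxvec_index i j) = u 0 i * c 0 j.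
Proof. by rewrite /tensor_row mxvecE mxE big_ord1 !mxE. Qed.

Lemma qsq_tensor_row m (u : 'rV[F]_m) : qsq (tensor_row u) = qsq c * qsq u.
Proof.
rewrite /qsq (reindex _ (curry_mxvec_bij _ _)) /=.
rewrite (eq_bigr (fun p => (u 0 p.1 * c 0 p.2) ^+ 2)); last first.
  by move=> [i j] _; rewrite tensor_rowE.
rewrite -(pair_bigA _ (fun i j => (u 0 i * c 0 j) ^+ 2)) mulrC mulr_suml.
apply: eq_bigr => i _.
by rewrite mulr_sumr; apply: eq_bigr => j _; rewrite exprMn.
Qed.

Lemma Bq_tensor_row m (u w : 'rV[F]_m) :
  Bq (tensor_row u) (tensor_row w) = qsq c * Bq u w.
Proof. by rewrite /Bq -linearD /= !qsq_tensor_row !mulrBr. Qed.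

End TensorRow.

Lemma sum_sqr_char2 (F : fieldType) k (x : 'I_k -> F) :
  (2%:R : F) = 0 -> \sum_(i < k) x i ^+ 2 = (\sum_(i < k) x i) ^+ 2.
Proof.
move=> two_eq0; apply: (big_ind2 (fun a b => a = b ^+ 2)) => //.
  by rewrite expr0n.
by move=> _ b1 _ b2 -> ->; rewrite sqrrD -mulr_natr two_eq0 mulr0 addr0.
Qed.

Lemma pyth_bound_char2 (F : fieldType) p :
  (1 <= p)%N -> (2%:R : F) = 0 -> pyth_bound F p.
Proof.
case: p => // p _ two_eq0 _ [k [x ->]]; rewrite sum_sqr_char2 //.
exists (fun i : 'I_p.+1 => if val i == 0%N then \sum_(i < k) x i else 0).
by rewrite big_ord_recl [X in _ + X]big1 ?addr0 // => i _; rewrite expr0n.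
Qed.

Lemma m_bound_pyth_bound (F : fieldType) m :
  (2%:R : F) != 0 -> m_bound F m -> pyth_bound F m.
Proof.
move=> two_neq0 mb _ [k [x ->]]; set a := \sum_(i < k) _.
have [-> | a_neq0] := eqVneq a 0.
  by rewrite -(qsq0 F m); exact: sum_of_p_squares_qsq.
pose c : 'rV[F]_k := \row_j (x j / a).
have qsq_c : qsq c = a^-1.
  rewrite /qsq; under eq_bigr => j _ do rewrite mxE expr_div_n.
  by rewrite -mulr_suml -/a expr2 invfM mulrA mulfV // mul1r.
have qsq_c_neq0 : qsq c != 0 by rewrite qsq_c invr_eq0.
pose f := linfun (@tensor_row _ _ c m).
have Bq_f u w : Bq (f u) (f w) = qsq c * Bq u w.
  by rewrite !lfunE Bq_tensor_row.
have ns_full := @q_nonsingular_fullv _ m two_neq0.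
have dim_img : (m <= \dim (f @: fullv))%N.
  by rewrite (similitude_dim_img qsq_c_neq0 Bq_f) // dimvf /dim /= mul1n.
have ns_img := similitude_nonsingular_img qsq_c_neq0 Bq_f ns_full.
have [_ /memv_imgP [u _ ->]] := mb _ _ dim_img ns_img.
rewrite lfunE /= qsq_tensor_row qsq_c => qsq_u.
have -> : a = qsq u by rewrite -[a]mulr1 -qsq_u mulrA mulfV // mul1r.
exact: sum_of_p_squares_qsq.
Qed.

Theorem proposition2p5 (F : fieldType) :
  forall m : nat, is_m_F F m ->
    exists p : nat, is_pythagoras_number F p /\ (p <= m)%N.
Proof.
move=> m [m_gt0 [mb _]].
have pb_m : pyth_bound F m.
  have [two_eq0 | two_neq0] := eqVneq (2%:R : F) 0.
    exact: pyth_bound_char2.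
  exact: m_bound_pyth_bound.
have [p [[p_gt0 pb_p] p_min]] :=
  @ex_minimal_nat (fun p => (1 <= p)%N /\ pyth_bound F p) (ex_intro _ m (conj m_gt0 pb_m)).
exists p; split; last exact: p_min.
by do 2!split=> //; move=> q q_gt0 pb_q; exact: p_min.
Qed.
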